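(* Let $w$ be a word over $\{L,R\}$ (an orbit pattern tag of an eventually fixed orbit). Then (1) $w$ forces each of its tails, i.e. every word $v'$ such that $w=vv'$ for some word $v$; and (2) every word $u$ forced by $w$ satisfies $|u|\le |w|$.
   Context: An interval map is a continuous map $f\colon I\to I$ on a compact interval $I=[a,b]$, $a<b$. Words are finite strings (including the empty word) over $\{L,R\}$; $|w|$ denotes the length of $w$. For $x\in I$ put $x_1=x$, $x_{j+1}=f(x_j)$. If $x$ is eventually fixed, let $n\ge 0$ be least such that $x_{n+1}$ is a fixed point of $f$; the orbit pattern tag of $x$ is the word of length $n$ whose $j$-th letter ($1\le j\le n$) is $L$ if $x_{j+1}<x_j$ and $R$ if $x_{j+1}>x_j$ (a fixed point has the empty word as tag). The map $f$ admits the tag $w$ if some point of $I$ has orbit pattern tag $w$. A word $w$ forces a word $u$ if every interval map admitting the tag $w$ also admits the tag $u$. *)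

From Stdlib Require Import Reals Lra List.
Open Scope R_scope.

Inductive letter : Type := letL | letR.

Definition word := list letter.

Definition continuous_on_interval (a b : R) (f : R -> R) : Prop :=
  forall x, a <= x <= b ->
  forall eps, 0 < eps -> exists delta, 0 < delta /\
    forall y, a <= y <= b -> Rabs (y - x) < delta -> Rabs (f y - f x) < eps.

(* f is an interval map on I = [a,b] (a < b required separately). *)
Definition interval_map (a b : R) (f : R -> R) : Prop :=
  (forall x, a <= x <= b -> a <= f x <= b) /\ continuous_on_interval a b f.

Definition is_fixed (f : R -> R) (y : R) : Prop := f y = y.

(* x_{j+1} = Nat.iter j f x.  The point x has orbit pattern tag w iff
   n = |w| is least with x_{n+1} fixed, and the j-th letter of w (0-based j)
   records whether x_{j+2} < x_{j+1} (L) or x_{j+2} > x_{j+1} (R). *)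
Definition has_tag (f : R -> R) (x : R) (w : word) : Prop :=
  is_fixed f (Nat.iter (length w) f x) /\
  (forall k, (k < length w)%nat -> ~ is_fixed f (Nat.iter k f x)) /\
  (forall j, (j < length w)%nat ->
     (nth j w letL = letL -> Nat.iter (S j) f x < Nat.iter j f x) /\
     (nth j w letL = letR -> Nat.iter (S j) f x > Nat.iter j f x)).

Definition admits_tag (a b : R) (f : R -> R) (w : word) : Prop :=
  exists x, a <= x <= b /\ has_tag f x w.

Definition forces (w u : word) : Prop :=
  forall (a b : R) (f : R -> R), a < b -> interval_map a b f ->
    admits_tag a b f w -> admits_tag a b f u.

From Stdlib Require Import Reals Lra List Lia.
Open Scope R_scope.

(* Part (1): if x has tag v ++ v', then its |v|-th iterate has tag v'.
   Part (2): for a word w of length n >= 1 put p_j = +-(n - j), with sign +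
   for the letter L and - for R, so that |p_j| decreases to p_n = 0 and the
   j-th step p_j -> p_(j+1) goes in the direction w_j.  Interpolate
   p_j |-> p_(j+1) by tent functions and clamp the result to
   |f x| <= max(|x| - 1, 0).  Then p_0 has tag w on [-n, n], while 0 is the
   only fixed point and every orbit in [-n, n] is at 0 after n steps, so no
   tag longer than n is admitted.  The empty word is handled by the identity,
   which admits only the empty tag. *)

Lemma Rabs_le_between (x a : R) : Rabs x <= a <-> - a <= x <= a.
Proof.
  split; [|apply Rabs_le].
  intro Hx; pose proof (RRle_abs x); pose proof (RRle_abs (- x)).
  rewrite Rabs_Ropp in *; lra.
Qed.

Lemma iter_maps_into (a b : R) (f : R -> R) (x : R) (k : nat) :
  (forall y, a <= y <= b -> a <= f y <= b) ->
  a <= x <= b -> a <= Nat.iter k f x <= b.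
Proof. intros Hf Hx; induction k; simpl; auto. Qed.

Lemma has_tag_suffix (f : R -> R) (x : R) (v v' : word) :
  has_tag f x (v ++ v') -> has_tag f (Nat.iter (length v) f x) v'.
Proof.
  unfold has_tag; rewrite length_app; intros [Hfix [Hnfix Hdir]]; split; [|split].
  - rewrite <- Nat.iter_add, Nat.add_comm; exact Hfix.
  - intros k Hk; rewrite <- Nat.iter_add; apply Hnfix; lia.
  - intros j Hj; rewrite <- !Nat.iter_add.
    specialize (Hdir (length v + j)%nat ltac:(lia)); rewrite app_nth2_plus in Hdir.
    replace (S j + length v)%nat with (S (length v + j)) by lia.
    replace (j + length v)%nat with (length v + j)%nat by lia.
    exact Hdir.
Qed.

Lemma forces_suffix (v v' : word) : forces (v ++ v') v'.
Proof.
  intros a b f _ [Hmaps _] [x [Hx Htag]].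
  exists (Nat.iter (length v) f x); split.
  - exact (iter_maps_into a b f x _ Hmaps Hx).
  - exact (has_tag_suffix f x v v' Htag).
Qed.

Lemma admits_tag_length_le (a b : R) (f : R -> R) (N : nat) (u : word) :
  (forall x, a <= x <= b -> is_fixed f (Nat.iter N f x)) ->
  admits_tag a b f u -> (length u <= N)%nat.
Proof.
  intros Hfix [x [Hx [_ [Hnfix _]]]].
  destruct (Nat.le_gt_cases (length u) N) as [|HN]; [assumption|].
  exfalso; exact (Hnfix N HN (Hfix x Hx)).
Qed.

Lemma continuous_on_interval_of_continuity (a b : R) (f : R -> R) :
  continuity f -> continuous_on_interval a b f.
Proof.
  intros Hf x _ eps Heps; destruct (Hf x eps Heps) as [d [Hd Hcont]].
  exists d; split; [exact Hd|]; intros y _ Hy.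
  destruct (Req_dec y x) as [->|Hne].
  - rewrite Rminus_diag, Rabs_R0; exact Heps.
  - apply (Hcont y); repeat split; auto.
Qed.

Lemma continuity_cst (c : R) : continuity (fun _ => c).
Proof. apply continuity_const; intros ? ?; reflexivity. Qed.

Lemma continuity_ext (f g : R -> R) :
  (forall x, f x = g x) -> continuity f -> continuity g.
Proof.
  intros Hfg Hf x; apply (continuity_pt_locally_ext f g 1 x Rlt_0_1); auto.
Qed.

Lemma continuity_Rmax (f g : R -> R) :
  continuity f -> continuity g -> continuity (fun x => Rmax (f x) (g x)).
Proof.
  intros Hf Hg.
  apply (continuity_ext (fun x => (f x + g x + Rabs (f x - g x)) * / 2)).
  - intro x; unfold Rmax; destruct (Rle_dec (f x) (g x)).
    + rewrite Rabs_left1 by lra; field.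
    + rewrite Rabs_right by lra; field.
  - apply continuity_mult; [|apply continuity_cst].
    apply continuity_plus; [apply continuity_plus; assumption|].
    apply (continuity_comp (fun x => f x - g x) Rabs);
      [apply continuity_minus; assumption|apply Rcontinuity_abs].
Qed.

Lemma continuity_Rmin (f g : R -> R) :
  continuity f -> continuity g -> continuity (fun x => Rmin (f x) (g x)).
Proof.
  intros Hf Hg.
  apply (continuity_ext (fun x => - Rmax (- f x) (- g x))).
  - intro x; unfold Rmin, Rmax.
    destruct (Rle_dec (f x) (g x)), (Rle_dec (- f x) (- g x)); lra.
  - apply continuity_opp, continuity_Rmax; apply continuity_opp; assumption.
Qed.

Lemma interval_map_id (a b : R) : interval_map a b (fun x => x).
Proof.
  split; [auto|]; apply continuous_on_interval_of_continuity.
  exact (derivable_continuous _ derivable_id).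
Qed.

Definition letter_sign (l : letter) : R := match l with letL => 1 | letR => -1 end.

Definition tent (c x : R) : R := Rmax 0 (1 - Rabs (x - c)).

Definition shrink (x : R) : R := Rmax (Rabs x - 1) 0.

Definition clamp (m s : R) : R := Rmax (- m) (Rmin m s).

Lemma Rabs_letter_sign (l : letter) : Rabs (letter_sign l) = 1.
Proof. destruct l; simpl; [apply Rabs_R1|rewrite Rabs_left; lra]. Qed.

Lemma tent_center (c : R) : tent c c = 1.
Proof. unfold tent; rewrite Rminus_diag, Rabs_R0, Rminus_0_r; apply Rmax_right; lra. Qed.

Lemma tent_far (c x : R) : 1 <= Rabs (x - c) -> tent c x = 0.
Proof. intro H; apply Rmax_left; lra. Qed.

Lemma continuity_tent (c : R) : continuity (tent c).
Proof.
  apply continuity_Rmax; [apply continuity_cst|].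
  apply continuity_minus; [apply continuity_cst|].
  apply (continuity_comp (fun x => x - c) Rabs); [|apply Rcontinuity_abs].
  apply continuity_minus; [exact (derivable_continuous _ derivable_id)|].
  apply continuity_cst.
Qed.

Lemma shrink_ge0 (x : R) : 0 <= shrink x.
Proof. apply Rmax_r. Qed.

Lemma continuity_shrink : continuity shrink.
Proof.
  apply continuity_Rmax; [|apply continuity_cst].
  apply continuity_minus; [apply Rcontinuity_abs|].
  apply continuity_cst.
Qed.

Lemma Rabs_clamp_le (m s : R) : 0 <= m -> Rabs (clamp m s) <= m.
Proof.
  intro Hm; apply Rabs_le_between; unfold clamp, Rmax, Rmin.
  repeat destruct (Rle_dec _ _); lra.
Qed.

Lemma clamp_id (m s : R) : Rabs s <= m -> clamp m s = s.
Proof.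
  rewrite Rabs_le_between; intro Hs; unfold clamp.
  rewrite Rmin_right by lra; apply Rmax_right; lra.
Qed.

Section TagMap.

Variable w : word.
Let n := length w.

Definition tag_point (j : nat) : R := letter_sign (nth j w letL) * INR (n - j).

Fixpoint tag_spline (k : nat) (x : R) : R :=
  match k with
  | O => 0
  | S k => tag_spline k x + tag_point (S k) * tent (tag_point k) x
  end.

Definition tag_map (x : R) : R := clamp (shrink x) (tag_spline n x).

Lemma Rabs_tag_point (j : nat) : Rabs (tag_point j) = INR (n - j).
Proof.
  unfold tag_point; rewrite Rabs_mult, Rabs_letter_sign, Rmult_1_l.
  apply Rabs_right, Rle_ge, pos_INR.
Qed.

Lemma tag_point_last : tag_point n = 0.
Proof. unfold tag_point; rewrite Nat.sub_diag; apply Rmult_0_r. Qed.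

Lemma tag_point_neq0 (j : nat) : (j < n)%nat -> tag_point j <> 0.
Proof.
  intros Hj H0; pose proof (Rabs_tag_point j) as Habs.
  rewrite H0, Rabs_R0 in Habs; apply (not_0_INR (n - j)); [lia|auto].
Qed.

Lemma Rabs_tag_point_succ (j : nat) :
  (j < n)%nat -> Rabs (tag_point (S j)) + 1 = Rabs (tag_point j).
Proof.
  intro Hj; rewrite !Rabs_tag_point, <- S_INR; f_equal; lia.
Qed.

Lemma tag_point_step (j : nat) : (j < n)%nat ->
  (nth j w letL = letL -> tag_point (S j) < tag_point j) /\
  (nth j w letL = letR -> tag_point (S j) > tag_point j).
Proof.
  intro Hj; pose proof (Rabs_tag_point_succ j Hj) as Hsucc.
  pose proof (proj1 (Rabs_le_between _ _) (Rle_refl (Rabs (tag_point (S j))))) as Hbounds.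
  assert (Hpj : tag_point j = letter_sign (nth j w letL) * Rabs (tag_point j)).
  { rewrite Rabs_tag_point; reflexivity. }
  split; intro Hl; rewrite Hl in Hpj; simpl in Hpj; lra.
Qed.

Lemma tag_point_sep (i j : nat) : (i < n)%nat -> (j < n)%nat -> i <> j ->
  1 <= Rabs (tag_point i - tag_point j).
Proof.
  intros Hi Hj Hij.
  pose proof (Rabs_triang_inv (tag_point i) (tag_point j)) as Htri_ij.
  pose proof (Rabs_triang_inv (tag_point j) (tag_point i)) as Htri_ji.
  rewrite Rabs_minus_sym in Htri_ji; rewrite !Rabs_tag_point, !minus_INR in * by lia.
  assert (Hlt : (S i <= j \/ S j <= i)%nat) by lia.
  destruct Hlt as [Hlt|Hlt]; apply le_INR in Hlt; rewrite S_INR in Hlt; lra.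
Qed.

Lemma tag_spline_tag_point (k j : nat) : (j < n)%nat -> (k <= n)%nat ->
  tag_spline k (tag_point j) = if (j <? k)%nat then tag_point (S j) else 0.
Proof.
  intros Hj; induction k as [|k IHk]; intros Hk; simpl tag_spline.
  - destruct (Nat.ltb_spec j 0); [lia|reflexivity].
  - rewrite IHk by lia.
    destruct (Nat.eq_dec k j) as [->|Hne].
    + rewrite tent_center, Nat.ltb_irrefl, (proj2 (Nat.ltb_lt j (S j))) by lia; ring.
    + rewrite tent_far by (apply tag_point_sep; lia).
      destruct (Nat.ltb_spec j k), (Nat.ltb_spec j (S k)); try lia; ring.
Qed.

Lemma continuity_tag_spline (k : nat) : continuity (tag_spline k).
Proof.
  induction k as [|k IHk]; simpl.
  - apply continuity_cst.
  - apply continuity_plus; [exact IHk|]; apply continuity_scal, continuity_tent.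
Qed.

Lemma continuity_tag_map : continuity tag_map.
Proof.
  apply continuity_Rmax; [apply continuity_opp, continuity_shrink|].
  apply continuity_Rmin; [apply continuity_shrink|apply continuity_tag_spline].
Qed.

Lemma Rabs_tag_map_le (x : R) : Rabs (tag_map x) <= shrink x.
Proof. apply Rabs_clamp_le, shrink_ge0. Qed.

Lemma tag_map_tag_point (j : nat) : (j < n)%nat -> tag_map (tag_point j) = tag_point (S j).
Proof.
  intro Hj; unfold tag_map.
  rewrite tag_spline_tag_point, (proj2 (Nat.ltb_lt j n)) by lia.
  apply clamp_id; unfold shrink.
  rewrite <- (Rabs_tag_point_succ j Hj), Rmax_left; [lra|].
  pose proof (Rabs_pos (tag_point (S j))); lra.
Qed.

Lemma iter_tag_map_tag_point (j : nat) :
  (j <= n)%nat -> Nat.iter j tag_map (tag_point 0) = tag_point j.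
Proof.
  induction j as [|j IHj]; intro Hj; [reflexivity|].
  simpl; rewrite IHj by lia; apply tag_map_tag_point; lia.
Qed.

Lemma tag_map_fixed_iff (y : R) : is_fixed tag_map y <-> y = 0.
Proof.
  pose proof (Rabs_tag_map_le y) as Hle; unfold is_fixed, shrink in *; split.
  - intro Hfix; rewrite Hfix in Hle.
    destruct (Req_dec y 0) as [|Hy]; [assumption|].
    pose proof (Rabs_pos_lt y Hy); unfold Rmax in Hle; destruct (Rle_dec _ _); lra.
  - intros ->; rewrite Rabs_R0, Rmax_right in Hle by lra.
    apply Rabs_le_between in Hle; lra.
Qed.

Lemma iter_tag_map_eq0 (k : nat) (x : R) :
  Rabs x <= INR k -> Nat.iter k tag_map x = 0.
Proof.
  revert x; induction k as [|k IHk]; intros x Hx.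
  - apply Rabs_le_between in Hx; simpl in *; lra.
  - rewrite Nat.iter_succ_r; apply IHk.
    eapply Rle_trans; [apply Rabs_tag_map_le|].
    rewrite S_INR in Hx; apply Rmax_lub; [lra|apply pos_INR].
Qed.

Lemma interval_map_tag_map : interval_map (- INR n) (INR n) tag_map.
Proof.
  split; [|apply continuous_on_interval_of_continuity, continuity_tag_map].
  intros x Hx; apply Rabs_le_between; apply Rabs_le_between in Hx.
  eapply Rle_trans; [apply Rabs_tag_map_le|].
  apply Rmax_lub; [lra|apply pos_INR].
Qed.

Lemma has_tag_tag_point : has_tag tag_map (tag_point 0) w.
Proof.
  unfold has_tag; fold n; split; [|split].
  - rewrite iter_tag_map_tag_point, tag_point_last by lia; apply tag_map_fixed_iff; reflexivity.
  - intros k Hk; rewrite iter_tag_map_tag_point, tag_map_fixed_iff by lia.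
    apply tag_point_neq0; exact Hk.
  - intros j Hj; rewrite !iter_tag_map_tag_point by lia; apply tag_point_step; exact Hj.
Qed.

Lemma admits_tag_tag_map : admits_tag (- INR n) (INR n) tag_map w.
Proof.
  exists (tag_point 0); split; [|exact has_tag_tag_point].
  apply Rabs_le_between; rewrite Rabs_tag_point, Nat.sub_0_r; apply Rle_refl.
Qed.

End TagMap.

Lemma forces_length_le (w u : word) : forces w u -> (length u <= length w)%nat.
Proof.
  intro Hforces; destruct (Nat.eq_0_gt_0_cases (length w)) as [Hw|Hw].
  - apply length_zero_iff_nil in Hw; subst w.
    apply (admits_tag_length_le 0 1 (fun x => x)); [reflexivity|].
    apply Hforces; [exact Rlt_0_1|apply interval_map_id|].
    exists 0; split; [lra|]; split; [reflexivity|split; intros; simpl in *; lia].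
  - apply lt_0_INR in Hw.
    apply (admits_tag_length_le (- INR (length w)) (INR (length w)) (tag_map w)).
    + intros x Hx; apply tag_map_fixed_iff, iter_tag_map_eq0, Rabs_le_between, Hx.
    + apply Hforces; [lra|apply interval_map_tag_map|apply admits_tag_tag_map].
Qed.

Theorem mainTheorem2 (w : word) :
  (forall v v' : word, w = v ++ v' -> forces w v') /\
  (forall u : word, forces w u -> (length u <= length w)%nat).
Proof.
  split.
  - intros v v' ->; apply forces_suffix.
  - apply forces_length_le.
Qed.
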